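(* For every simple graph $G$, $e(G)\leq(\Delta(G)+1)M(G)$, where $\Delta(G)$ is the maximum degree and $M(G)$ the size of a maximum matching. Furthermore, for every integer $k\geq 7$, \[\mathcal{E}_{P_1\cup P_2}(k)=\begin{cases}k^2-\frac32 k & k\text{ even},\\ k^2-k & k\text{ odd}.\end{cases}\]
   Context: $P_1\cup P_2$ is the vertex-disjoint union of a single edge and a path with two edges. Graphs are simple, 2-uniform, without isolated vertices. $\operatorname{ex}(G,H)$ is the maximum number of edges of a subgraph of $G$ containing no copy of $H$, and $\mathcal{E}_H(k):=\sup\{e(G): G\text{ simple}, \operatorname{ex}(G,H)<k\}$. *)

From mathcomp Require Import all_boot.
Set Implicit Arguments. Unset Strict Implicit. Unset Printing Implicit Defensive.

(* A finite simple graph on vertex type T is given by its edge set E, a set of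
   2-element subsets of T. Isolated vertices are irrelevant to every quantity
   below (e(G), Delta(G), M(G), ex(G,H)). *)
Definition is_simple_graph (T : finType) (E : {set {set T}}) : Prop :=
  forall e, e \in E -> #|e| = 2.

Definition nedges (T : finType) (E : {set {set T}}) : nat := #|E|.

Definition max_degree (T : finType) (E : {set {set T}}) : nat :=
  \max_(v : T) #|[set e in E | v \in e]|.

Definition is_matching (T : finType) (M : {set {set T}}) : bool :=
  [forall e1 in M, forall e2 in M, (e1 == e2) || [disjoint e1 & e2]].

Definition matching_number (T : finType) (E : {set {set T}}) : nat :=
  \max_(M in powerset E | is_matching M) #|M|.

(* F contains a copy of P_1 \cup P_2: an edge ab and a path cde, with
   a,b,c,d,e pairwise distinct *)
Definition has_P1P2 (T : finType) (F : {set {set T}}) : bool :=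
  [exists a : T, exists b : T, exists c : T, exists d : T, exists e : T,
    [&& uniq [:: a; b; c; d; e], [set a; b] \in F, [set c; d] \in F
      & [set d; e] \in F]].

Definition ex_P1P2 (T : finType) (E : {set {set T}}) : nat :=
  \max_(F in powerset E | ~~ has_P1P2 F) #|F|.

Definition is_E_P1P2 (k v : nat) : Prop :=
  (forall (T : finType) (E : {set {set T}}),
      is_simple_graph E -> ex_P1P2 E < k -> nedges E <= v) /\
  (forall b : nat,
      (forall (T : finType) (E : {set {set T}}),
          is_simple_graph E -> ex_P1P2 E < k -> nedges E <= b) -> v <= b).

From mathcomp Require Import all_boot.
From mathcomp Require Import zify.
Set Implicit Arguments. Unset Strict Implicit. Unset Printing Implicit Defensive.

(* The first claim follows from the sharper Chvatal-Hanson bound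
   e <= d m + floor(d/2) floor(m / ceil(d/2)) for maximum degree d and matching
   number m, proved by induction on the number of edges.  If deleting some
   vertex lowers m, its at most d edges are paid for by the step from m - 1 to
   m.  Otherwise every vertex is missed by some maximum matching, and
   exchanging along alternating paths (Gallai's lemma) shows that a connected
   such graph has at most 2m + 1 vertices, which gives the bound by counting;
   disconnected graphs are handled by superadditivity.

   A P1 u P2-free graph with at least 7 edges is a star or a matching, so
   ex(G, P1 u P2) < k forces d, m <= k - 1 and the Chvatal-Hanson bound gives
   the upper value.  It is attained by two disjoint copies of K_k for odd k,
   and for k = 2j by K_(k+1) minus j + 1 edges covering its vertices together
   with j - 1 disjoint stars with k - 1 leaves. *)

Definition chvatal_hanson d m := d * m + d./2 * (m %/ uphalf d).

Lemma leq_chvatal_hanson d m1 m2 : m1 <= m2 -> chvatal_hanson d m1 <= chvatal_hanson d m2.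
Proof.
move=> le_m; rewrite /chvatal_hanson.
by apply: leq_add; rewrite leq_mul2l ?leq_div2r ?le_m ?orbT.
Qed.

Lemma chvatal_hanson_step d m1 m2 :
  m1 < m2 -> chvatal_hanson d m1 + d <= chvatal_hanson d m2.
Proof.
move=> lt_m; apply: leq_trans (leq_chvatal_hanson d lt_m); rewrite /chvatal_hanson.
have : m1 %/ uphalf d <= m1.+1 %/ uphalf d by rewrite leq_div2r.
rewrite mulnS; move/(leq_mul (leqnn d./2)); lia.
Qed.

Lemma chvatal_hanson_superadditive d a b :
  chvatal_hanson d a + chvatal_hanson d b <= chvatal_hanson d (a + b).
Proof.
have le_q : a %/ uphalf d + b %/ uphalf d <= (a + b) %/ uphalf d.
  case: (posnP (uphalf d)) => [->|c_gt0]; first by rewrite !divn0.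
  by rewrite leq_divRL // mulnDl leq_add ?leq_divM.
move/(leq_mul (leqnn d./2)): le_q; rewrite /chvatal_hanson !mulnDr; lia.
Qed.

Lemma chvatal_hanson_le_succ d m : chvatal_hanson d m <= d.+1 * m.
Proof.
rewrite /chvatal_hanson mulSn addnC leq_add2r.
have half_le : d./2 <= uphalf d by lia.
by apply: leq_trans (leq_mul half_le (leqnn _)) _; rewrite mulnC leq_divM.
Qed.

(* If d >= 2m+1 the binomial bound gives e <= (2m+1)m <= dm.  Otherwise
   m >= ceil(d/2), so the second summand is at least floor(d/2) and absorbs
   the excess of the degree count e <= dm + d/2. *)
Lemma chvatal_hanson_small_order d m n e :
  n <= m.*2.+1 -> e.*2 <= n * d -> e <= 'C(n, 2) -> e <= chvatal_hanson d m.
Proof.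
move=> le_n le_2e; rewrite bin2 => le_e; rewrite /chvatal_hanson.
case: (leqP m.*2.+1 d) => le_d.
  have : e <= m.*2.+1 * m.
    rewrite -[m.*2.+1 * m]doubleK doubleMr; apply: leq_trans le_e (half_leq _).
    by apply: leq_mul; lia.
  move/leq_trans; apply; apply: leq_trans (leq_addr _ _).
  by rewrite leq_mul2r le_d orbT.
case: (posnP d) => [d0|d_gt0].
  by move: le_2e; rewrite d0 muln0 leqn0 double_eq0 => /eqP->.
have q_gt0 : 0 < m %/ uphalf d by rewrite divn_gt0; lia.
have : n * d <= m.*2.+1 * d by rewrite leq_mul2r le_n orbT.
have : d./2 <= d./2 * (m %/ uphalf d) by rewrite leq_pmulr.
move: le_2e; rewrite mulSn -doubleMl mulnC; lia.
Qed.

Section Matchings.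
Variable T : finType.
Implicit Types (E F M N : {set {set T}}) (e f g : {set T}) (u v w x y : T).

Lemma disjointP (A B : {set T}) :
  reflect (forall x, x \in A -> x \in B -> False) [disjoint A & B].
Proof.
rewrite -setI_eq0; apply: (iffP eqP) => [AB0 x xA xB | AB].
  have : x \in A :&: B by rewrite inE xA xB.
  by rewrite AB0 inE.
by apply/setP => x; rewrite inE in_set0; apply/negP => /andP[]; exact: AB.
Qed.

Lemma coverP x M : reflect (exists2 e, e \in M & x \in e) (x \in cover M).
Proof. exact: bigcupP. Qed.

Lemma cover_subset M N : M \subset N -> {subset cover M <= cover N}.
Proof. by move=> /subsetP sMN x /coverP[e /sMN eN xe]; apply/coverP; exists e. Qed.

Lemma in_coverU1 x e M : (x \in cover (e |: M)) = (x \in e) || (x \in cover M).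
Proof. by rewrite /cover bigcup_setU big_set1 inE. Qed.

Lemma edge_of_card2 e x : #|e| = 2 -> x \in e -> exists2 y, y != x & e = [set x; y].
Proof.
move=> /eqP /cards2P [a [b [ab ->]]] /set2P[]->; first by exists b; rewrite // eq_sym.
by exists a => //; rewrite setUC.
Qed.

Lemma edge_subset E e (W : {set T}) : is_simple_graph E -> e \in E ->
  (forall x y, e = [set x; y] -> x != y -> x \in W) -> e \subset W.
Proof.
move=> sE eE inW; have /cards2P[x [y [xy exy]]] : #|e| == 2 by rewrite sE.
apply/subsetP => z; rewrite exy => /set2P[]->; first exact: inW exy xy.
by apply: (inW y x); rewrite 1?eq_sym // exy setUC.
Qed.

Lemma matchingP M :
  reflect (forall e f, e \in M -> f \in M -> e != f -> [disjoint e & f]) (is_matching M).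
Proof.
apply: (iffP forall_inP) => [mM e f eM fM ef | mM e eM].
  by have /forall_inP/(_ f fM) := mM e eM; rewrite (negbTE ef).
by apply/forall_inP => f fM; case: eqP => //= /eqP; exact: mM.
Qed.

Lemma matching_subset M N : M \subset N -> is_matching N -> is_matching M.
Proof.
by move=> /subsetP sMN /matchingP mN; apply/matchingP => e f /sMN eN /sMN; apply: mN.
Qed.

Lemma matching_eq M e f x :
  is_matching M -> e \in M -> f \in M -> x \in e -> x \in f -> e = f.
Proof.
move=> /matchingP mM eM fM xe xf; apply/eqP; apply: contraT => ef.
by move/disjointP: (mM _ _ eM fM ef) => /(_ x xe xf).
Qed.

Lemma matchingU1 M e : is_matching M -> [disjoint e & cover M] -> is_matching (e |: M).
Proof.
move=> /matchingP mM eM.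
have disj f : f \in M -> [disjoint e & f].
  move=> fM; apply/disjointP => z ze zf; move/disjointP: eM => /(_ z ze); apply.
  by apply/coverP; exists f.
apply/matchingP => f g /setU1P[->|fM] /setU1P[->|gM]; first by rewrite eqxx.
- by move=> _; apply: disj.
- by move=> _; rewrite disjoint_sym; apply: disj.
- exact: mM.
Qed.

Lemma in_coverD1 x f M : is_matching M -> f \in M ->
  (x \in cover (M :\ f)) = (x \notin f) && (x \in cover M).
Proof.
move=> mM fM; apply/coverP/andP => [[g] | [xf /coverP[g gM xg]]].
  rewrite !inE => /andP[gf gM] xg; split; last by apply/coverP; exists g.
  by apply: contra gf => xf; rewrite (matching_eq mM gM fM xg xf).
by exists g; rewrite // !inE gM andbT; apply: contraNneq xf => <-.
Qed.

Lemma card_cover_matching M : is_simple_graph M -> is_matching M -> #|cover M| = #|M|.*2.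
Proof.
move=> sM mM; have tM : trivIset M.
  by apply/trivIsetP => e f eM fM; apply: (matchingP _ mM).
by rewrite -(eqP tM) (eq_bigr (fun=> 2)) ?sum_nat_const ?muln2 // => e /sM.
Qed.

Lemma leq_matching_number E M : M \subset E -> is_matching M -> #|M| <= matching_number E.
Proof. by move=> sME mM; apply: (leq_bigmax_cond M); rewrite powersetE sME. Qed.

Definition maximum_matching E M := [/\ M \subset E, is_matching M & #|M| = matching_number E].

Lemma matching_number_attained E : exists M, maximum_matching E M.
Proof.
have M0 : (set0 \in powerset E) && is_matching (set0 : {set {set T}}).
  by rewrite powersetE sub0set; apply/matchingP => e f; rewrite inE.
rewrite /maximum_matching /matching_number (bigmax_eq_arg set0 M0).
case: arg_maxnP => // M /andP[].
by rewrite powersetE => sME mM _; exists M.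
Qed.

Lemma matching_number_leP E t :
  reflect (forall M, M \subset E -> is_matching M -> #|M| <= t) (matching_number E <= t).
Proof.
apply: (iffP idP) => [le_t M sME mM | le_t].
  exact: leq_trans (leq_matching_number sME mM) le_t.
by have [M [sME mM <-]] := matching_number_attained E; apply: le_t.
Qed.

Lemma matching_number_augment E M x y : M \subset E -> is_matching M ->
  [set x; y] \in E -> x \notin cover M -> y \notin cover M -> #|M| < matching_number E.
Proof.
move=> sME mM xyE xM yM.
have xyM : [set x; y] \notin M.
  by apply: contra xM => xyM; apply/coverP; exists [set x; y]; rewrite ?set21.
have <- : #|[set x; y] |: M| = #|M|.+1 by rewrite cardsU1 xyM.
rewrite leq_matching_number //.
  by rewrite subUset sub1set xyE.
apply: matchingU1 => //; apply/disjointP => z /set2P[]-> zM.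
  by rewrite zM in xM.
by rewrite zM in yM.
Qed.

End Matchings.

Section Exchange.
Variable T : finType.
Implicit Types (E F M N : {set {set T}}) (e f g : {set T}) (u v w x y : T).

(* [M'] and [N'] arise from [M] and [N] by switching along an [N]-[M]
   alternating path from [u] to [x]. *)
Definition exchange E M N u x M' N' :=
  [/\ M' \subset E, N' \subset E, is_matching M', is_matching N' &
      #|M'| = #|M| /\ #|N'| = #|N|] /\
  [/\ x \notin cover N, x != u, x \in cover N',
      {subset cover M' <= (u |: cover M) :\ x} &
      {subset cover N' <= x |: (cover N :\ u)}].

Section ExchangeStep.
Variables (E M N : {set {set T}}) (u a b : T).
Hypotheses (sME : M \subset E) (sNE : N \subset E).
Hypotheses (mM : is_matching M) (mN : is_matching N) (uM : u \notin cover M).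
Hypotheses (uaN : [set u; a] \in N) (abM : [set a; b] \in M).
Hypotheses (au : a != u) (ba : b != a).

Let aM : a \in cover M. Proof. by apply/coverP; exists [set a; b]; rewrite ?set21. Qed.
Let bM : b \in cover M. Proof. by apply/coverP; exists [set a; b]; rewrite ?set22. Qed.
Let aN : a \in cover N. Proof. by apply/coverP; exists [set u; a]; rewrite ?set22. Qed.
Let bu : b != u. Proof. by apply: contraNneq uM => <-. Qed.
Let uaM : [set u; a] \notin M.
Proof. by apply: contra uM => uaM; apply/coverP; exists [set u; a]; rewrite ?set21. Qed.

Let cardM : #|M :\ [set a; b]|.+1 = #|M|.
Proof. by rewrite (cardsD1 [set a; b] M) abM. Qed.
Let cardN : #|N :\ [set u; a]|.+1 = #|N|.
Proof. by rewrite (cardsD1 [set u; a] N) uaN. Qed.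

Lemma exchange_at_end : b \notin cover N ->
  exchange E M N u b ([set u; a] |: M :\ [set a; b]) ([set a; b] |: N :\ [set u; a]).
Proof.
move=> bN; split; split.
- by rewrite subUset sub1set (subsetP sNE) // (subset_trans (subsetDl _ _)).
- by rewrite subUset sub1set (subsetP sME) // (subset_trans (subsetDl _ _)).
- apply: matchingU1; first exact: matching_subset (subsetDl _ _) mM.
  apply/disjointP => z /set2P[]->; rewrite in_coverD1 // ?(negbTE uM) ?andbF //.
  by rewrite set21.
- apply: matchingU1; first exact: matching_subset (subsetDl _ _) mN.
  apply/disjointP => z /set2P[]->; rewrite in_coverD1 // ?(negbTE bN) ?andbF //.
  by rewrite set22.
- have abN : [set a; b] \notin N.
    by apply: contra bN => abN; apply/coverP; exists [set a; b]; rewrite ?set22.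
  by rewrite !cardsU1 !in_setD1 (negbTE uaM) (negbTE abN) !andbF.
- exact: bN.
- exact: bu.
- by rewrite in_coverU1 set22.
- move=> z; rewrite in_coverU1 in_coverD1 // !inE => /orP[/orP[]/eqP->|].
  + by rewrite eq_sym bu eqxx.
  + by rewrite eq_sym ba aM orbT.
  + by rewrite negb_or => /andP[/andP[_ ->] ->]; rewrite orbT.
- move=> z; rewrite in_coverU1 in_coverD1 // !inE => /orP[/orP[]/eqP->|].
  + by rewrite eq_sym (negbTE au) aN orbT.
  + by rewrite eqxx.
  + by rewrite negb_or => /andP[/andP[-> _] ->]; rewrite orbT.
Qed.

Let E1 := [set g in E | (u \notin g) && (a \notin g)].

Let E1_avoid z : z \in cover E1 -> (z != u) && (z != a).
Proof.
case/coverP => g; rewrite inE => /andP[_ /andP[ug ag]] zg.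
by apply/andP; split; [apply: contraNneq ug => <- | apply: contraNneq ag => <-].
Qed.

Lemma exchange_subgraph_simple : is_simple_graph E -> is_simple_graph E1.
Proof. by move=> sE g; rewrite inE => /andP[/sE]. Qed.

Lemma exchange_subgraph_matchings : M :\ [set a; b] \subset E1 /\ N :\ [set u; a] \subset E1.
Proof.
split; apply/subsetP => g; rewrite !inE => /andP[gf gMN].
  rewrite (subsetP sME) //=; apply/andP; split.
    by apply: contra uM => ug; apply/coverP; exists g.
  by apply: contra gf => ag; rewrite (matching_eq mM gMN abM ag) ?set21.
rewrite (subsetP sNE) //=; apply/andP; split; apply: contra gf => xg.
  by rewrite (matching_eq mN gMN uaN xg) ?set21.
by rewrite (matching_eq mN gMN uaN xg) ?set22.
Qed.

Lemma exchange_endpoints : b \in cover N ->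
  b \notin cover (M :\ [set a; b]) /\ b \in cover (N :\ [set u; a]).
Proof. by move=> bN; rewrite !in_coverD1 // !inE eqxx orbT negb_or bu ba. Qed.

Lemma matching_number_lift : #|M :\ [set a; b]| < matching_number E1 ->
  #|M| < matching_number E.
Proof.
have [M1 [sM1 mM1 <-]] := matching_number_attained E1.
rewrite -cardM => lt_M1; apply: leq_ltn_trans lt_M1 _.
have uaM1 : [set u; a] \notin M1.
  by apply/negP => /(subsetP sM1); rewrite inE set21 andbF.
have <- : #|[set u; a] |: M1| = #|M1|.+1 by rewrite cardsU1 uaM1.
apply: leq_matching_number.
  rewrite subUset sub1set (subsetP sNE) //; apply: subset_trans sM1 _.
  by apply/subsetP => g; rewrite inE => /andP[].
apply: matchingU1 => //; apply/disjointP => z zua /(cover_subset sM1)/E1_avoid.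
by case/set2P: zua => ->; rewrite eqxx ?andbF.
Qed.

Lemma exchange_lift x M' N' : b \in cover N ->
  exchange E1 (M :\ [set a; b]) (N :\ [set u; a]) b x M' N' ->
  exchange E M N u x ([set u; a] |: M') ([set a; b] |: N').
Proof.
move=> bN [[sM' sN' mM' mN' [cM' cN']] [xN xb xN' cvM' cvN']].
have sE1 : E1 \subset E by apply/subsetP => g; rewrite inE => /andP[].
have /andP[xu xa] := E1_avoid (cover_subset sN' xN').
split; split.
- by rewrite subUset sub1set (subsetP sNE) // (subset_trans sM').
- by rewrite subUset sub1set (subsetP sME) // (subset_trans sN').
- apply: matchingU1 => //; apply/disjointP => z zua /(cover_subset sM')/E1_avoid.
  by case/set2P: zua => ->; rewrite eqxx ?andbF.
- apply: matchingU1 => //; apply/disjointP => z /set2P[]-> zN'.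
    by move: (E1_avoid (cover_subset sN' zN')); rewrite eqxx andbF.
  by move: (cvN' b zN'); rewrite !inE eqxx /= orbF eq_sym (negbTE xb).
- have uaM' : [set u; a] \notin M'.
    by apply/negP => /(subsetP sM'); rewrite inE set21 andbF.
  have abN' : [set a; b] \notin N'.
    by apply/negP => /(subsetP sN'); rewrite inE set21 !andbF.
  by rewrite !cardsU1 uaM' abN' cM' cN' !add1n cardM cardN.
- by move: xN; rewrite in_coverD1 // !inE negb_or xu xa.
- exact: xu.
- by rewrite in_coverU1 xN' orbT.
- move=> z; rewrite in_coverU1 !inE => /orP[/orP[]/eqP->|zM'].
  + by rewrite eq_sym xu eqxx.
  + by rewrite eq_sym xa aM orbT.
  + move: (cvM' z zM'); rewrite !inE => /andP[-> /=] /orP[/eqP->|].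
      by rewrite bM orbT.
    by rewrite in_coverD1 // => /andP[_ ->]; rewrite orbT.
- move=> z; rewrite in_coverU1 !inE => /orP[/orP[]/eqP->|zN'].
  + by rewrite eq_sym (negbTE au) aN orbT.
  + by rewrite (negbTE bu) bN orbT.
  + move: (cvN' z zN'); rewrite !inE => /orP[->//|/andP[_]].
    by rewrite in_coverD1 // !inE negb_or => /andP[/andP[-> _] ->]; rewrite orbT.
Qed.

End ExchangeStep.

Lemma matching_exchange E M N u : is_simple_graph E -> M \subset E -> N \subset E ->
  is_matching M -> is_matching N -> u \notin cover M -> u \in cover N ->
  #|M| < matching_number E \/ exists x M' N', exchange E M N u x M' N'.
Proof.
have [n] := ubnP #|N|; elim: n => // n IH in E M N u *.
rewrite ltnS => leNn sE sME sNE mM mN uM /coverP[e eN ue].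
have [a au eua] := edge_of_card2 (sE _ (subsetP sNE _ eN)) ue; subst e.
have [aM|aM] := boolP (a \in cover M); last first.
  by left; apply: (matching_number_augment sME mM (subsetP sNE _ eN)).
have [f fM af] := coverP _ _ aM.
have [b ba fab] := edge_of_card2 (sE _ (subsetP sME _ fM)) af; subst f.
have [bN|bN] := boolP (b \in cover N); last first.
  right; exists b, ([set u; a] |: M :\ [set a; b]), ([set a; b] |: N :\ [set u; a]).
  exact: exchange_at_end.
have [sM1 sN1] := exchange_subgraph_matchings sME sNE mM mN uM eN fM.
have [bM1 bN1] := exchange_endpoints mM mN uM eN fM ba bN.
have leN1 : #|N :\ [set u; a]| < n by rewrite (cardsD1 [set u; a] N) eN in leNn.
case: (IH _ _ _ _ leN1 (exchange_subgraph_simple (u:=u) (a:=a) sE) sM1 sN1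
        (matching_subset (subsetDl _ _) mM) (matching_subset (subsetDl _ _) mN) bM1 bN1).
  by left; apply: (matching_number_lift sNE eN fM).
case=> x [M' [N' ex]]; right; exists x, ([set u; a] |: M'), ([set a; b] |: N').
exact: (exchange_lift sME sNE mM mN uM eN fM au bN ex).
Qed.

End Exchange.

Section Gallai.
Variable T : finType.
Implicit Types (E F M N : {set {set T}}) (e f g : {set T}) (u v w x y : T).

Definition adj E : rel T := fun x y => [set x; y] \in E.

Definition inessential E w := exists N, maximum_matching E N /\ w \notin cover N.

(* For a maximum matching N missing w,
   exchanging M and N from u either moves the hole of M from u to w, or leaves
   both u and w uncovered by the new N', contradicting maximality via uw. *)
Lemma unmatched_connected_eq E M u v : is_simple_graph E -> (forall w, inessential E w) ->
  connect (adj E) u v -> maximum_matching E M -> u \notin cover M -> v \notin cover M ->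
  u = v.
Proof.
move=> sE inessE /connectP[p]; elim: p => [|w p IH] in u M * => /= [_ -> //|].
case/andP=> uw pw vl [sME mM cM] uM vM.
have [//|uv] := eqVneq u v; exfalso.
have [wv|wv] := eqVneq w v.
  by move: (matching_number_augment sME mM uw uM); rewrite wv vM cM ltnn => /(_ isT).
have [N [[sNE mN cN] wN]] := inessE w.
have [uN|uN] := boolP (u \in cover N); last first.
  by move: (matching_number_augment sNE mN uw uN wN); rewrite cN ltnn.
case: (matching_exchange sE sME sNE mM mN uM uN) => [|[x [M' [N' ex]]]].
  by rewrite cM ltnn.
case: ex => [[sM'E sN'E mM' mN' [cM' cN']] [xN xu xN' cvM' cvN']].
have [xw|xw] := eqVneq x w.
- move/eqP: wv; apply; apply: (IH w M') => //.
  + by split; rewrite ?cM'.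
  + by apply/negP => /cvM'; rewrite xw setD11.
  + apply/negP => /cvM'; rewrite !inE => /andP[_ /orP[/eqP vu|]].
      by rewrite vu eqxx in uv.
    by rewrite (negbTE vM).
- have uN' : u \notin cover N'.
    by apply/negP => /cvN'; rewrite !inE eqxx /= orbF eq_sym (negbTE xu).
  have wN' : w \notin cover N'.
    apply/negP => /cvN'; rewrite !inE => /orP[/eqP wx|/andP[_]].
      by rewrite wx eqxx in xw.
    by rewrite (negbTE wN).
  by move: (matching_number_augment sN'E mN' uw uN' wN'); rewrite cN' cN ltnn.
Qed.

Lemma card_cover_connected E : is_simple_graph E -> (forall w, inessential E w) ->
  {in cover E &, forall x y, connect (adj E) x y} ->
  #|cover E| <= (matching_number E).*2.+1.
Proof.
move=> sE inessE connE; have [M maxM] := matching_number_attained E.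
have [sME mM cM] := maxM.
have sM : is_simple_graph M by move=> e /(subsetP sME)/sE.
have unmatched : #|cover E :\: cover M| <= 1.
  apply/card_le1_eqP => x y; rewrite !inE => /andP[xM xE] /andP[yM yE].
  by rewrite (unmatched_connected_eq sE inessE (connE x y xE yE) maxM).
rewrite -(cardsID (cover M) (cover E)) -cM -(card_cover_matching sM mM) -addn1.
by rewrite leq_add // subset_leq_card // subsetIr.
Qed.

End Gallai.

Section ChvatalHanson.
Variable T : finType.
Implicit Types (E F M N : {set {set T}}) (e f g : {set T}) (u v w x y : T).

Definition degree E v := #|[set e in E | v \in e]|.

Lemma leq_degree_max E v : degree E v <= max_degree E.
Proof. exact: leq_bigmax. Qed.

Lemma max_degree_le E t : (forall v, degree E v <= t) -> max_degree E <= t.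
Proof. by move=> le_t; apply/bigmax_leqP => v _; apply: le_t. Qed.

Lemma max_degree_subset F E : F \subset E -> max_degree F <= max_degree E.
Proof.
move=> sFE; apply: max_degree_le => v; apply: leq_trans (leq_degree_max E v).
by apply/subset_leq_card/subsetP => e; rewrite !inE => /andP[/(subsetP sFE) -> ->].
Qed.

Lemma sum_degree E : is_simple_graph E -> \sum_(v in cover E) degree E v = #|E|.*2.
Proof.
move=> sE; transitivity (\sum_(v in cover E) \sum_(e in E) (v \in e : nat)).
  apply: eq_bigr => v _; rewrite /degree -big_mkcondr /= sum1dep_card.
  by apply: eq_card => e; rewrite !inE.
rewrite exchange_big /= -muln2 -sum_nat_const; apply: eq_bigr => e eE.
rewrite -big_mkcondr /= sum1dep_card -(sE e eE); apply: eq_card => v; rewrite !inE.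
by apply/andP/idP => [[]//|ve]; split=> //; apply/coverP; exists e.
Qed.

Lemma card_edges_le_bin E (W : {set T}) : is_simple_graph E ->
  (forall e, e \in E -> e \subset W) -> #|E| <= 'C(#|W|, 2).
Proof.
move=> sE sEW; rewrite -cards_draws; apply/subset_leq_card/subsetP => e eE.
by rewrite inE sEW // sE.
Qed.

Definition delete_vertex E v := [set e in E | v \notin e].

Lemma delete_vertex_subset E v : delete_vertex E v \subset E.
Proof. by apply/subsetP => e; rewrite inE => /andP[]. Qed.

Lemma card_delete_vertex E v : #|E| = #|delete_vertex E v| + degree E v.
Proof.
rewrite -(cardsID [set e : {set T} | v \in e] E) addnC /degree; congr (_ + _).
  by apply: eq_card => e; rewrite !inE andbC.
by apply: eq_card => e; rewrite !inE andbC.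
Qed.

Lemma inessential_delete_vertex E v :
  matching_number E <= matching_number (delete_vertex E v) -> inessential E v.
Proof.
move=> le_nu; have [N [sN mN cN]] := matching_number_attained (delete_vertex E v).
exists N; split.
  split=> //; first exact: subset_trans sN (delete_vertex_subset E v).
  apply/eqP; rewrite eqn_leq cN le_nu andbT.
  by rewrite -cN leq_matching_number // (subset_trans sN) ?delete_vertex_subset.
by apply/coverP => -[e /(subsetP sN)]; rewrite inE => /andP[_ /negP].
Qed.

Lemma matching_number_disjointU E1 E2 E : is_simple_graph E ->
  E1 \subset E -> E2 \subset E -> {in E1 & E2, forall e f, [disjoint e & f]} ->
  matching_number E1 + matching_number E2 <= matching_number E.
Proof.
move=> sE sE1 sE2 disjE12.
have [M1 [sM1 mM1 <-]] := matching_number_attained E1.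
have [M2 [sM2 mM2 <-]] := matching_number_attained E2.
have disjM12 e f : e \in M1 -> f \in M2 -> [disjoint e & f].
  by move=> /(subsetP sM1) eE1 /(subsetP sM2); apply: disjE12.
have M12 : M1 :&: M2 = set0.
  apply/setP => e; rewrite !inE; apply/andP => -[eM1 eM2].
  have /card_gt0P[x xe] : 0 < #|e| by rewrite sE // (subsetP sE1) // (subsetP sM1).
  by move/disjointP: (disjM12 e e eM1 eM2) => /(_ x xe xe).
have <- : #|M1 :|: M2| = #|M1| + #|M2| by rewrite cardsU M12 cards0 subn0.
rewrite leq_matching_number //.
  by rewrite subUset (subset_trans sM1) // (subset_trans sM2).
apply/matchingP => e f /setUP[eM1|eM2] /setUP[fM1|fM2].
- exact: (matchingP _ mM1).
- by move=> _; apply: disjM12.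
- by move=> _; rewrite disjoint_sym; apply: disjM12.
- exact: (matchingP _ mM2).
Qed.

Lemma disconnected_split E x y : is_simple_graph E -> x \in cover E -> y \in cover E ->
  ~~ connect (adj E) x y ->
  exists E1, [/\ E1 \subset E, #|E1| < #|E|, #|E :\: E1| < #|E| &
                 {in E1 & E :\: E1, forall e f, [disjoint e & f]}].
Proof.
move=> sE /coverP[ex exE xex] /coverP[ey eyE yey] nxy.
pose C := [set z | connect (adj E) x z].
have closedC e p : e \in E -> p \in e -> p \in C -> e \subset C.
  move=> eE pe pC; have [q _ epq] := edge_of_card2 (sE e eE) pe.
  apply/subsetP => z; rewrite epq => /set2P[]-> //; move: pC; rewrite !inE.
  by move/connect_trans; apply; apply: connect1; rewrite /adj -epq.
have exC : ex \subset C by apply: (closedC ex x) => //; rewrite inE connect0.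
have eyC : ~~ (ey \subset C) by apply: contra nxy => /subsetP/(_ y yey); rewrite inE.
exists [set e in E | e \subset C]; split.
- by apply/subsetP => e; rewrite inE => /andP[].
- apply/proper_card/properP; split; first by apply/subsetP => e; rewrite inE => /andP[].
  by exists ey; rewrite // inE (negbTE eyC) andbF.
- apply/proper_card/properP; split; first exact: subsetDl.
  by exists ex; rewrite // !inE exE exC.
- move=> e f; rewrite !inE => /andP[_ eC] /andP[fC fE].
  apply/disjointP => z ze zf; move: fC; rewrite fE (closedC f z) //.
  exact: (subsetP eC).
Qed.

Lemma edges_le_chvatal_hanson_connected d E : is_simple_graph E -> max_degree E <= d ->
  (forall w, inessential E w) -> {in cover E &, forall x y, connect (adj E) x y} ->
  #|E| <= chvatal_hanson d (matching_number E).
Proof.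
move=> sE dE inessE connE.
apply: (chvatal_hanson_small_order (card_cover_connected sE inessE connE)).
  rewrite -sum_degree // -sum_nat_const; apply: leq_sum => v _.
  exact: leq_trans (leq_degree_max E v) dE.
by apply: card_edges_le_bin => // e eE; apply: bigcup_sup.
Qed.

Theorem edges_le_chvatal_hanson d E : is_simple_graph E -> max_degree E <= d ->
  #|E| <= chvatal_hanson d (matching_number E).
Proof.
have [n] := ubnP #|E|; elim: n => // n IH in E *; rewrite ltnS => leEn sE dE.
have IHsub F : F \subset E -> #|F| < #|E| -> #|F| <= chvatal_hanson d (matching_number F).
  move=> sFE ltFE; apply: IH; first exact: leq_trans ltFE leEn.
    by move=> e /(subsetP sFE)/sE.
  exact: leq_trans (max_degree_subset sFE) dE.
case: (pickP (fun v => matching_number (delete_vertex E v) < matching_number E)).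
  move=> v ltv; have deg_gt0 : 0 < degree E v.
    rewrite lt0n; apply: contraTneq ltv => deg0.
    suff -> : delete_vertex E v = E by rewrite ltnn.
    apply/eqP; rewrite eqEcard delete_vertex_subset /=.
    by rewrite {1}(card_delete_vertex E v) deg0 addn0.
  rewrite (card_delete_vertex E v); apply: leq_trans (chvatal_hanson_step d ltv).
  apply: leq_add; last exact: leq_trans (leq_degree_max E v) dE.
  apply: IHsub; first exact: delete_vertex_subset.
  by rewrite [X in _ < X](card_delete_vertex E v) -[X in X < _]addn0 ltn_add2l.
move=> essE; have inessE w : inessential E w.
  by apply: inessential_delete_vertex; rewrite leqNgt essE.
case: (boolP [forall x in cover E, forall y in cover E, connect (adj E) x y]).
  move/forall_inP => connE; apply: edges_le_chvatal_hanson_connected => // x y xE yE.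
  by move/forall_inP: (connE x xE) => /(_ y yE).
case/forall_inPn => x xE /forall_inPn [y yE nxy].
have [E1 [sE1 ltE1 ltE2 disjE12]] := disconnected_split sE xE yE nxy.
rewrite -(cardsID E1 E) (setIidPr sE1).
apply: leq_trans (leq_add (IHsub _ sE1 ltE1) (IHsub _ (subsetDl E E1) ltE2)) _.
apply: leq_trans (chvatal_hanson_superadditive _ _ _) _.
by apply/leq_chvatal_hanson/matching_number_disjointU => //; exact: subsetDl.
Qed.

End ChvatalHanson.

Ltac distinct := rewrite /= ?inE ?negb_or; repeat (apply/andP; split); by [|rewrite eq_sym].

Section P1P2Free.
Variable T : finType.
Implicit Types (E F M : {set {set T}}) (e f g : {set T}).

Lemma has_P1P2_intro F (a b c d e : T) : uniq [:: a; b; c; d; e] ->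
  [set a; b] \in F -> [set c; d] \in F -> [set d; e] \in F -> has_P1P2 F.
Proof.
move=> abcde ab cd de; apply/existsP; exists a; apply/existsP; exists b.
by apply/existsP; exists c; apply/existsP; exists d; apply/existsP; exists e; apply/and4P.
Qed.

Lemma card_edges_within F (s : seq T) : is_simple_graph F ->
  (forall e, e \in F -> e \subset [set x in s]) -> #|F| <= 'C(size s, 2).
Proof.
move=> sF sFs; apply: leq_trans (card_edges_le_bin sF sFs) _.
by rewrite leq_bin2l // cardsE card_size.
Qed.

Lemma P1P2_free_P4_card F (y c d e : T) : is_simple_graph F -> ~~ has_P1P2 F ->
  uniq [:: y; c; d; e] -> [set y; c] \in F -> [set c; d] \in F -> [set d; e] \in F ->
  #|F| <= 6.
Proof.
move=> sF fF ycde Fyc Fcd Fde.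
apply: (card_edges_within (s := [:: y; c; d; e])) => // g gF.
apply: (edge_subset sF gF) => p q gpq pq; rewrite inE; apply: contraT => pW.
move: ycde pW; rewrite /= !inE !negb_or.
move=> /and3P[/and3P[yc yd ye] /andP[cd ce] /andP[de _]] /and4P[py pc pd pe].
case/negP: fF; rewrite gpq in gF.
have [qy|qy] := eqVneq q y; first subst q.
  by apply: (has_P1P2_intro (a := p) (b := y) (c := c) (d := d) (e := e)); first distinct.
have [qc|qc] := eqVneq q c; first subst q.
  apply: (has_P1P2_intro (a := d) (b := e) (c := p) (d := c) (e := y)) => //.
    distinct.
  by rewrite setUC.
have [qd|qd] := eqVneq q d; first subst q.
  by apply: (has_P1P2_intro (a := y) (b := c) (c := p) (d := d) (e := e)); first distinct.
have [qe|qe] := eqVneq q e; first subst q.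
  by apply: (has_P1P2_intro (a := p) (b := e) (c := y) (d := c) (e := d)); first distinct.
by apply: (has_P1P2_intro (a := p) (b := q) (c := c) (d := d) (e := e)); first distinct.
Qed.

Lemma P1P2_free_attach F (c d e p q : T) : is_simple_graph F -> ~~ has_P1P2 F ->
  6 < #|F| -> uniq [:: c; d; e] -> [set c; d] \in F -> [set d; e] \in F ->
  [set p; q] \in F -> p \notin [:: c; d; e] -> q = d.
Proof.
move=> sF fF F7 cde Fcd Fde Fpq pW.
have pq : p != q by move: (sF _ Fpq); rewrite cards2; case: eqP.
have small_F : #|F| <= 6 -> False by rewrite leqNgt F7.
move: cde pW; rewrite /= !inE !negb_or => /andP[/andP[cd ce] /andP[de _]] /and3P[pc pd pe].
have [qc|qc] := eqVneq q c; first subst q.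
  exfalso; apply: small_F.
  by apply: (P1P2_free_P4_card (y := p) (c := c) (d := d) (e := e) sF fF) => //; distinct.
have [qe|qe] := eqVneq q e; first subst q.
  exfalso; apply: small_F.
  apply: (P1P2_free_P4_card (y := p) (c := e) (d := d) (e := c) sF fF) => //.
  - by distinct.
  - by rewrite setUC.
  - by rewrite setUC.
have [//|qd] := eqVneq q d.
case/negP: fF.
by apply: (has_P1P2_intro (a := p) (b := q) (c := c) (d := d) (e := e)); first distinct.
Qed.

(* Take a path c-d-e.  An edge avoiding d can only be ce, and then an edge
   leaving the triangle cde would have to end both at d and at c. *)
Lemma P1P2_free_matching_or_star F : is_simple_graph F -> ~~ has_P1P2 F -> 6 < #|F| ->
  is_matching F \/ exists z, forall e, e \in F -> z \in e.
Proof.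
move=> sF fF F7; have [mF|nmF] := boolP (is_matching F); [by left | right].
case/forall_inPn: nmF => e1 e1F /forall_inPn[e2 e2F].
rewrite negb_or -setI_eq0 => /andP[e12 /set0Pn[d]]; rewrite inE => /andP[de1 de2].
have [c cd e1dc] := edge_of_card2 (sF _ e1F) de1.
have [e ed e2de] := edge_of_card2 (sF _ e2F) de2; subst e1 e2.
have ce : c != e by apply: contraNneq e12 => ->.
have Fcd : [set c; d] \in F by rewrite setUC.
have cde : uniq [:: c; d; e] by distinct.
have attach p q : [set p; q] \in F -> q != d -> p \in [:: c; d; e].
  move=> Fpq; apply: contraTT => pW; apply/negPn/eqP.
  exact: (P1P2_free_attach sF fF F7 cde Fcd e2F Fpq pW).
have [/forall_inP star|/forall_inPn[f Ff df]] := boolP [forall (f | f \in F), d \in f].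
  by exists d.
exfalso; have /cards2P[p [q [pq fpq]]] : #|f| == 2 by rewrite sF.
move: df; rewrite fpq !inE negb_or => /andP[dp dq]; rewrite fpq in Ff.
have Fce : [set c; e] \in F.
  have := attach p q Ff; have := attach q p; rewrite setUC => /(_ Ff).
  rewrite ![_ == d]eq_sym dp dq !inE ![_ == d]eq_sym (negbTE dp) (negbTE dq) /=.
  move=> /(_ isT) qce /(_ isT) pce.
  case/orP: pce qce pq Ff => /eqP-> /orP[]/eqP-> //; rewrite ?eqxx // => _.
  by rewrite setUC.
suff : #|F| <= 'C(size [:: c; d; e], 2) by rewrite leqNgt (leq_trans _ F7).
apply: card_edges_within => // g gF; apply: (edge_subset sF gF) => r s grs _.
rewrite grs in gF; rewrite inE; apply: contraT => rW.
have rW' : r \notin [:: d; c; e] by move: rW; rewrite !inE orbCA.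
have Fdc : [set d; c] \in F by rewrite setUC.
have dce : uniq [:: d; c; e] by distinct.
have := P1P2_free_attach sF fF F7 dce Fdc Fce gF rW'.
by rewrite (P1P2_free_attach sF fF F7 cde Fcd e2F gF rW) => /eqP; rewrite eq_sym (negbTE cd).
Qed.

End P1P2Free.

Section ExtremalNumber.
Variable T : finType.
Implicit Types (E F M : {set {set T}}) (e f g : {set T}).

Lemma leq_ex_P1P2 E F : F \subset E -> ~~ has_P1P2 F -> #|F| <= ex_P1P2 E.
Proof. by move=> sFE fF; apply: (leq_bigmax_cond F); rewrite powersetE sFE. Qed.

Lemma ex_P1P2_le E t : (forall F, F \subset E -> ~~ has_P1P2 F -> #|F| <= t) ->
  ex_P1P2 E <= t.
Proof. by move=> le_t; apply/bigmax_leqP => F; rewrite powersetE => /andP[]; apply: le_t. Qed.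

Lemma star_P1P2_free E (v : T) : ~~ has_P1P2 [set e in E | v \in e].
Proof.
apply/negP => /existsP[a /existsP[b /existsP[c /existsP[d /existsP[e]]]]].
case/and4P => abcde; rewrite !inE => /andP[_ vab] /andP[_ vcd] _.
by move: abcde; case/orP: vab => /eqP<-; case/orP: vcd => /eqP<-; rewrite /= !inE eqxx ?orbT ?andbF.
Qed.

Lemma matching_P1P2_free M : is_matching M -> ~~ has_P1P2 M.
Proof.
move=> mM; apply/negP => /existsP[a /existsP[b /existsP[c /existsP[d /existsP[e]]]]].
case/and4P => abcde _ Mcd Mde; move: (matching_eq mM Mcd Mde (set22 c d) (set21 d e)).
by move/setP/(_ e); rewrite set22 => /set2P[] ec; rewrite ec /= !inE eqxx ?orbT ?andbF in abcde.
Qed.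

Lemma max_degree_le_ex_P1P2 E : max_degree E <= ex_P1P2 E.
Proof.
apply/bigmax_leqP => v _; apply: leq_ex_P1P2 (star_P1P2_free E v).
by apply/subsetP => e; rewrite inE => /andP[].
Qed.

Lemma matching_number_le_ex_P1P2 E : matching_number E <= ex_P1P2 E.
Proof.
have [M [sME mM <-]] := matching_number_attained E.
exact: leq_ex_P1P2 sME (matching_P1P2_free mM).
Qed.

Lemma ex_P1P2_le_max E : is_simple_graph E ->
  ex_P1P2 E <= maxn 6 (maxn (max_degree E) (matching_number E)).
Proof.
move=> sE; apply: ex_P1P2_le => F sFE fF; rewrite !leq_max.
have [//|F7] := leqP #|F| 6.
have sF : is_simple_graph F by move=> e /(subsetP sFE)/sE.
case: (P1P2_free_matching_or_star sF fF F7) => [mF | [z starF]].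
  by rewrite leq_matching_number ?orbT.
suff -> : #|F| <= max_degree E by [].
apply: leq_trans (leq_degree_max E z).
by apply/subset_leq_card/subsetP => e eF; rewrite inE (subsetP sFE) ?starF.
Qed.

End ExtremalNumber.

Section MatchingBounds.
Variable T : finType.
Implicit Types (E F M : {set {set T}}) (e f g : {set T}) (v : T) (A W X : {set T}).

Lemma matching_number_subadditive E1 E2 :
  matching_number (E1 :|: E2) <= matching_number E1 + matching_number E2.
Proof.
apply/matching_number_leP => M sM mM.
have -> : M = (M :&: E1) :|: (M :&: E2) by rewrite -setIUr; apply/esym/setIidPl.
apply: leq_trans (leq_card_setU _ _) (leq_add _ _);
  by apply: leq_matching_number; rewrite ?subsetIr // (matching_subset (subsetIl _ _)).
Qed.

Lemma matching_number_le_half E W : is_simple_graph E ->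
  (forall e, e \in E -> e \subset W) -> matching_number E <= #|W|./2.
Proof.
move=> sE sEW; apply/matching_number_leP => M sME mM.
have sM : is_simple_graph M by move=> e /(subsetP sME)/sE.
rewrite -[#|M|]doubleK half_leq // -(card_cover_matching sM mM).
by apply/subset_leq_card/bigcupsP => e /(subsetP sME)/sEW.
Qed.

Lemma matching_number_le_vertex_cover E X :
  (forall e, e \in E -> exists2 x, x \in X & x \in e) -> matching_number E <= #|X|.
Proof.
move=> coverX; apply/matching_number_leP => M sME mM.
pose pick_end e := [pick x in X :&: e].
have pickS e : e \in M -> exists2 x, x \in X :&: e & pick_end e = Some x.
  move=> /(subsetP sME)/coverX[x xX xe]; rewrite /pick_end.
  case: pickP => [y ye|none]; first by exists y.
  by move: (none x); rewrite inE xX xe.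
have inj : {in M &, injective pick_end}.
  move=> e f eM fM; have [x xe ->] := pickS e eM; have [y yf ->] := pickS f fM.
  case=> xy; move: xe yf; rewrite -xy !inE => /andP[_ xe] /andP[_ xf].
  exact: (matching_eq mM eM fM xe xf).
rewrite -(card_in_imset inj) -(card_imset X (@Some_inj _)).
apply/subset_leq_card/subsetP => _ /imsetP[e eM ->].
by have [x] := pickS e eM; rewrite inE => /andP[xX _] ->; apply: imset_f.
Qed.

Lemma degree_le E v A :
  (forall e, e \in E -> v \in e -> exists2 y, y \in A & e = [set v; y]) -> degree E v <= #|A|.
Proof.
move=> nbrs; apply: leq_trans (leq_imset_card (fun y => [set v; y]) A).
apply/subset_leq_card/subsetP => e; rewrite inE => /andP[eE ve].
by have [y yA ->] := nbrs e eE ve; apply: imset_f.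
Qed.

Definition clique_edges W := [set e : {set T} | e \subset W & #|e| == 2].

Lemma card_clique_edges W : #|clique_edges W| = 'C(#|W|, 2).
Proof. exact: cards_draws. Qed.

Lemma clique_edges_simple W : is_simple_graph (clique_edges W).
Proof. by move=> e; rewrite inE => /andP[_ /eqP]. Qed.

Lemma clique_edges_subset W e : e \in clique_edges W -> e \subset W.
Proof. by rewrite inE => /andP[]. Qed.

Lemma clique_edge_at W e v : e \in clique_edges W -> v \in e ->
  exists2 y, y \in W :\ v & e = [set v; y].
Proof.
rewrite inE => /andP[sW /eqP e2] ve; have [y yv ey] := edge_of_card2 e2 ve.
by exists y => //; rewrite !inE yv (subsetP sW) // ey set22.
Qed.

Lemma matching_number_clique W : matching_number (clique_edges W) <= #|W|./2.
Proof.
apply: matching_number_le_half => [|e]; first exact: clique_edges_simple.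
exact: clique_edges_subset.
Qed.

End MatchingBounds.

Section TwoCliques.
Variable k : nat.

Definition clique_side (b : bool) := [set x : bool * 'I_k | x.1 == b].

Definition two_cliques := clique_edges (clique_side true) :|: clique_edges (clique_side false).

Lemma card_clique_side b : #|clique_side b| = k.
Proof.
have -> : clique_side b = setX [set b] [set: 'I_k].
  by apply/setP => -[b' i]; rewrite !inE andbT.
by rewrite cardsX cards1 cardsT card_ord mul1n.
Qed.

Lemma two_cliques_simple : is_simple_graph two_cliques.
Proof. by move=> e /setUP[]; apply: clique_edges_simple. Qed.

Lemma card_two_cliques : #|two_cliques| = 'C(k, 2).*2.
Proof.
rewrite cardsU !card_clique_edges !card_clique_side addnn.
suff -> : clique_edges (clique_side true) :&: clique_edges (clique_side false) = set0.
  by rewrite cards0 subn0.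
apply/setP => e; rewrite !inE; apply/negP => /andP[/andP[sT /eqP e2] /andP[sF _]].
have /card_gt0P[x xe] : 0 < #|e| by rewrite e2.
by move: (subsetP sT x xe) (subsetP sF x xe); rewrite !inE => /eqP->.
Qed.

Lemma max_degree_two_cliques : max_degree two_cliques <= k.-1.
Proof.
apply: max_degree_le => v.
have <- : #|clique_side v.1 :\ v| = k.-1.
  by move: (cardsD1 v (clique_side v.1)); rewrite card_clique_side inE eqxx; lia.
apply: degree_le => e /setUP[] eE ve; have [y yW ->] := clique_edge_at eE ve;
  exists y => //; move: (subsetP (clique_edges_subset eE) v ve);
  by rewrite inE => /eqP ->.
Qed.

Lemma matching_number_two_cliques : matching_number two_cliques <= (k./2).*2.
Proof.
apply: leq_trans (matching_number_subadditive _ _) _; rewrite -addnn.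
by apply: leq_add; apply: leq_trans (matching_number_clique _) _; rewrite card_clique_side.
Qed.

End TwoCliques.

(* Here k = 2m+2.  The row [hub] carries K_(k+1) minus the m+2 edges of
   [hub_removed], and every other row r a star from (r, None) to k-1 leaves. *)
Section EvenConstruction.
Variable m : nat.
Let I := 'I_m.+1.
Let P := (I * bool)%type.
Let V := (I * option P)%type.
Let o : I := ord0.
Let p0 : P := (o, false).

Definition hub : {set V} := [set x | x.1 == o].

Definition removed_pair (y : option I) : {set V} :=
  if y is Some i then [set (o, Some (i, false)); (o, Some (i, true))]
  else [set (o, None); (o, Some p0)].

Definition hub_removed := [set removed_pair y | y : option I].

Definition hub_edges := clique_edges hub :\: hub_removed.

Definition star_edge (rp : I * P) : {set V} := [set (rp.1, None); (rp.1, Some rp.2)].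

Definition star_edges := star_edge @: setX [set~ o] [set~ p0].

Definition even_extremal := hub_edges :|: star_edges.

Lemma card_hub : #|hub| = (m.+1).*2.+1.
Proof.
have -> : hub = setX [set o] [set: option P] by apply/setP => -[r x]; rewrite !inE andbT.
rewrite cardsX cards1 cardsT card_option card_prod card_ord card_bool; lia.
Qed.

Lemma card_hub_removed : #|hub_removed| <= m.+2.
Proof. by apply: leq_trans (leq_imset_card _ _) _; rewrite card_option card_ord. Qed.

Lemma hub_removed_partner x : exists2 x', x' != x & [set (o, x); (o, x')] \in hub_removed.
Proof.
case: x => [[i b]|]; last by exists (Some p0); last by apply/imsetP; exists None.
exists (Some (i, ~~ b)); first by apply/eqP => -[]; case: b.
by apply/imsetP; exists (Some i) => //; case: b; rewrite // setUC.
Qed.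

Lemma star_edge_inj : injective star_edge.
Proof.
move=> [r p] [r' p'] eq_rp.
have : (r, Some p) \in star_edge (r', p') by rewrite -eq_rp set22.
by rewrite !inE => /orP[]/eqP [] -> // ->.
Qed.

Lemma card_star_edges : #|star_edges| = m * (m.+1).*2.-1.
Proof.
rewrite card_imset; last exact: star_edge_inj.
rewrite cardsX !cardsC1 card_prod !card_ord card_bool; lia.
Qed.

Lemma star_edges_off_hub e v : e \in star_edges -> v \in e -> v.1 != o.
Proof. by case/imsetP => -[r p]; rewrite !inE => /andP[ro _] -> /set2P[]->. Qed.

Lemma hub_edges_on_hub e v : e \in hub_edges -> v \in e -> v.1 == o.
Proof.
by rewrite inE => /andP[_ /clique_edges_subset/subsetP sW] /sW; rewrite inE.
Qed.

Lemma even_extremal_simple : is_simple_graph even_extremal.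
Proof.
move=> e /setUP[|/imsetP[[r p] _ ->]].
  by rewrite inE => /andP[_]; apply: clique_edges_simple.
by rewrite cards2; apply/eqP; rewrite eqSS eqb1 xpair_eqE /= andbF.
Qed.

Lemma card_even_extremal :
  'C((m.+1).*2.+1, 2) - m.+2 + m * (m.+1).*2.-1 <= #|even_extremal|.
Proof.
rewrite cardsU card_star_edges.
have -> : hub_edges :&: star_edges = set0.
  apply/setP => e; rewrite in_setI in_set0; apply/negP => /andP[eH /[dup] eS].
  case/imsetP => rp _ erp; have re : (rp.1, None) \in e by rewrite erp set21.
  by move: (star_edges_off_hub eS re); rewrite (hub_edges_on_hub eH re).
rewrite cards0 subn0 leq_add2r -card_hub -card_clique_edges.
apply: leq_trans (leq_sub2l _ card_hub_removed) _.
by rewrite cardsD leq_sub2l // subset_leq_card // subsetIr.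
Qed.

(* A hub vertex is adjacent neither to itself nor to its partner in
   [hub_removed]; any other vertex lies only on the star of its row. *)
Lemma max_degree_even_extremal : max_degree even_extremal <= (m.+1).*2.-1.
Proof.
apply: max_degree_le => -[r x]; have [->|ro] := eqVneq r o.
  have [x' x'x removed] := hub_removed_partner x.
  pose A := hub :\ (o, x) :\ (o, x').
  have <- : #|A| = (m.+1).*2.-1.
    move: (cardsD1 (o, x) hub) (cardsD1 (o, x') (hub :\ (o, x))).
    rewrite card_hub !inE !xpair_eqE !eqxx x'x -/A /=.
    by move: #|A| #|hub :\ (o, x)| => a b; lia.
  apply: degree_le => e /setUP[eH|eS] ve; last first.
    by move: (star_edges_off_hub eS ve); rewrite eqxx.
  move: eH; rewrite inE => /andP[e_kept eK]; have [y yW ey] := clique_edge_at eK ve.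
  exists y => //; rewrite /A in_setD1 yW andbT.
  by apply: contraNneq e_kept => yx'; rewrite ey yx'.
have star_at e : e \in even_extremal -> (r, x) \in e ->
    exists2 p, p != p0 & e = star_edge (r, p).
  case/setUP => [eH /(hub_edges_on_hub eH)|/imsetP[[r' p] rp ->]]; first by rewrite (negbTE ro).
  by move: rp; rewrite !inE => /andP[_ pp0] /orP[]/eqP[<- _]; exists p.
case: x star_at => [q|] star_at.
  apply: leq_trans (degree_le (A := [set (r, None)]) _) _; last by rewrite cards1; lia.
  move=> e eE ve; have [p _ ep] := star_at e eE ve.
  move: ve; rewrite ep !inE !xpair_eqE /= => /orP[/andP[_ //]|/andP[_ /eqP[->]]].
  by exists (r, None); rewrite ?set11 // setUC.
apply: leq_trans (degree_le (A := [set (r, Some p) | p in [set~ p0]]) _) _.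
  move=> e eE ve; have [p pp0 ->] := star_at e eE ve.
  by exists (r, Some p) => //; apply: imset_f; rewrite !inE.
apply: leq_trans (leq_imset_card _ _) _.
by rewrite cardsC1 card_prod card_ord card_bool; lia.
Qed.

Lemma matching_number_even_extremal : matching_number even_extremal <= (m.+1).*2.-1.
Proof.
apply: leq_trans (matching_number_subadditive _ _) _.
have hub_nu : matching_number hub_edges <= m.+1.
  apply: leq_trans (matching_number_le_half (W := hub) _ _) _.
  - by move=> e eH; apply: even_extremal_simple; rewrite inE eH.
  - by move=> e; rewrite inE => /andP[_ /clique_edges_subset].
  - by rewrite card_hub; lia.
have star_nu : matching_number star_edges <= m.
  apply: leq_trans (matching_number_le_vertex_cover (X := [set (r, None) | r in [set~ o]]) _) _.
    move=> e /imsetP[[r p] rp ->]; exists (r, None); last exact: set21.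
    by apply: imset_f; move: rp; rewrite inE => /andP[].
  by apply: leq_trans (leq_imset_card _ _) _; rewrite cardsC1 card_ord.
by move: hub_nu star_nu; lia.
Qed.

End EvenConstruction.

Definition P1P2_extremal_value k := if odd k then k * k - k else k * k - (3 * k) %/ 2.

Lemma chvatal_hanson_pred_diag k : 0 < k -> chvatal_hanson k.-1 k.-1 <= P1P2_extremal_value k.
Proof.
move=> k_gt0; rewrite /P1P2_extremal_value; case: ifP => k_odd.
  by apply: leq_trans (chvatal_hanson_le_succ _ _) _; rewrite prednK // -subn1 mulnBr muln1.
have [j kj] : exists j, k = j.*2 by exists k./2; rewrite -[LHS]odd_double_half k_odd.
subst k.
have q_le1 : j.*2.-1 %/ uphalf j.*2.-1 <= 1 by rewrite -ltnS ltn_divLR; lia.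
rewrite /chvatal_hanson; move: q_le1; set q := _ %/ _ => q_le1.
have -> : j.*2.-1./2 = j.-1 by lia.
have : j.-1 * q <= j.-1 by rewrite -[leqRHS]muln1 leq_mul2l q_le1 orbT.
nia.
Qed.

Lemma P1P2_extremal_upper k (T : finType) (E : {set {set T}}) :
  is_simple_graph E -> ex_P1P2 E < k -> #|E| <= P1P2_extremal_value k.
Proof.
move=> sE exk; have k_gt0 : 0 < k by case: k exk.
have dE : max_degree E <= k.-1.
  by rewrite -ltnS prednK //; apply: leq_ltn_trans (max_degree_le_ex_P1P2 E) exk.
have nuE : matching_number E <= k.-1.
  by rewrite -ltnS prednK //; apply: leq_ltn_trans (matching_number_le_ex_P1P2 E) exk.
apply: leq_trans (edges_le_chvatal_hanson sE dE) _.
exact: leq_trans (leq_chvatal_hanson _ nuE) (chvatal_hanson_pred_diag k_gt0).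
Qed.

Lemma ex_P1P2_lt k (T : finType) (E : {set {set T}}) : 7 <= k -> is_simple_graph E ->
  max_degree E <= k.-1 -> matching_number E <= k.-1 -> ex_P1P2 E < k.
Proof.
move=> k7 sE dE nuE; apply: leq_ltn_trans (ex_P1P2_le_max sE) _.
by move: dE nuE; lia.
Qed.

Lemma P1P2_extremal_lower k : 7 <= k -> exists (T : finType) (E : {set {set T}}),
  [/\ is_simple_graph E, ex_P1P2 E < k & P1P2_extremal_value k <= #|E|].
Proof.
move=> k7; rewrite /P1P2_extremal_value; case: ifP => k_odd.
  exists _, (two_cliques k); split.
  - exact: two_cliques_simple.
  - apply: ex_P1P2_lt => //; first exact: two_cliques_simple.
      exact: max_degree_two_cliques.
    apply: leq_trans (matching_number_two_cliques k) _.
    by rewrite -[k in _ <= k.-1]odd_double_half k_odd.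
  - by rewrite card_two_cliques bin2odd // -[k in k.-1./2]odd_double_half k_odd; nia.
have [m km] : exists m, k = (m.+1).*2.
  exists k./2.-1; rewrite prednK; first by rewrite -[LHS]odd_double_half k_odd.
  by rewrite half_gt0 (leq_trans _ k7).
subst k; exists _, (even_extremal m); split.
- exact: even_extremal_simple.
- apply: ex_P1P2_lt => //; first exact: even_extremal_simple.
    exact: max_degree_even_extremal.
  exact: matching_number_even_extremal.
- apply: leq_trans (card_even_extremal m); rewrite bin2odd /= ?odd_double //.
  rewrite -doubleMr divn2 !doubleK; nia.
Qed.

Theorem theorem3p20 :
  (forall (T : finType) (E : {set {set T}}),
      is_simple_graph E -> nedges E <= (max_degree E).+1 * matching_number E) /\
  (forall k : nat, 7 <= k ->
      is_E_P1P2 k (if odd k then k * k - k else k * k - (3 * k) %/ 2)).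
Proof.
split=> [T E sE | k k7].
  exact: leq_trans (edges_le_chvatal_hanson sE (leqnn _)) (chvatal_hanson_le_succ _ _).
split=> [T E sE exk | b le_b]; first exact: P1P2_extremal_upper exk.
have [T [E [sE exk le_E]]] := P1P2_extremal_lower k7.
exact: leq_trans le_E (le_b T E sE exk).
Qed.
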